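(* Let $p$ be a prime greater than $3$. Then $$\sum_{k=0}^{[p/3]}\frac{(3k)!}{27^k\,k!^3}\equiv\Big(\frac p3\Big)\pmod p.$$
   Context: $[y]$ is the greatest integer not exceeding $y$; $\big(\frac p3\big)$ is the Legendre symbol. *)

From HB Require Import structures.
From mathcomp Require Import all_boot all_order all_algebra.
Set Implicit Arguments. Unset Strict Implicit. Unset Printing Implicit Defensive.
Import Order.TTheory GRing.Theory Num.Theory.

Definition legendre (a q : nat) : int :=
  if q %| a then 0%R
  else if [exists x : 'I_q, (x ^ 2) %% q == a %% q] then 1%R else (-1)%R.

From HB Require Import structures.
From mathcomp Require Import all_boot all_order all_algebra.
From mathcomp Require Import ring zify.
Set Implicit Arguments. Unset Strict Implicit. Unset Printing Implicit Defensive.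
Import Order.TTheory GRing.Theory Num.Theory.
Local Open Scope ring_scope.

(* Pick a, b with 3a + 1 = 3b + 2 = 0 mod p, a + b = p - 1 and min(a, b) = [p/3].
   Modulo p, (3k)!/(27^k k!^3) = prod_(j<k) (j + 1/3)(j + 2/3)/(j + 1)^2 is then
   'C(a, k) 'C(b, k), so by Vandermonde the sum is 'C(p - 1, [p/3]) = (-1)^[p/3],
   and the parity of [p/3] for odd p is exactly what decides p mod 3. *)

Lemma prime_ndvd_fact p k : prime p -> (k < p)%N -> ~~ (p %| k`!)%N.
Proof.
move=> p_pr; elim: k => [|k IHk] lt_kp; first by rewrite dvdn1 neq_ltn prime_gt1 ?orbT.
rewrite factS Euclid_dvdM // negb_or IHk 1?ltnW // andbT.
by apply/negP => /dvdn_leq; lia.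
Qed.

Lemma natr_fact3_ffact (R : comNzRingType) (a b k : nat) :
  (3 * a + 1)%N%:R = 0 :> R -> (3 * b + 2)%N%:R = 0 :> R -> (k <= a)%N -> (k <= b)%N ->
  ((3 * k)`!)%:R = (27 ^ k * k`! * a ^_ k * b ^_ k)%N%:R :> R.
Proof.
move=> a3 b3; elim: k => [|k IHk] lt_ka lt_kb; first by rewrite !ffactn0.
have {}IHk := IHk (ltnW lt_ka) (ltnW lt_kb).
rewrite (_ : 3 * k.+1 = (3 * k).+3)%N; last by lia.
rewrite !factS !ffactnSr expnS !natrM IHk !natrM.
rewrite (natrB _ (ltnW lt_ka)) (natrB _ (ltnW lt_kb)).
(* (3k+1)(3k+2)(3k+3) = 27 (a-k)(b-k)(k+1), since 3a = -1 and 3b = -2. *)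
have aK : 3 * (a%:R - k%:R) = - (3 * k).+1%:R :> R by rewrite -[RHS]addr0 -a3; ring.
have bK : 3 * (b%:R - k%:R) = - (3 * k).+2%:R :> R by rewrite -[RHS]addr0 -b3; ring.
transitivity ((27 ^ k)%:R * k`!%:R * (a ^_ k)%:R * (b ^_ k)%:R
  * (3 * (a%:R - k%:R) * (3 * (b%:R - k%:R)) * (3 * k.+1%:R)) : R); last by ring.
by rewrite aK bK; ring.
Qed.

Lemma Fp_fact3_div_binM p a b k : prime p -> (3 < p)%N ->
    (p %| 3 * a + 1)%N -> (p %| 3 * b + 2)%N -> (k <= a)%N -> (k <= b)%N -> (k < p)%N ->
  ((3 * k)`!)%:R / (27 ^ k * k`! ^ 3)%:R = ('C(a, k) * 'C(b, k))%N%:R :> 'F_p.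
Proof.
move=> p_pr lt3p pa pb le_ka le_kb lt_kp.
have Fp_eq0 n : (n%:R == 0 :> 'F_p) = (p %| n)%N by rewrite (dvdn_pcharf (pchar_Fp p_pr)).
have den_neq0 : (27 ^ k * k`! ^ 3)%:R != 0 :> 'F_p.
  rewrite Fp_eq0 Euclid_dvdM // !Euclid_dvdX // (_ : 27 = 3 ^ 3)%N // Euclid_dvdX //.
  by rewrite dvdn_prime2 // gtn_eqF //= andbT prime_ndvd_fact.
have a3 : (3 * a + 1)%N%:R = 0 :> 'F_p by apply/eqP; rewrite Fp_eq0.
have b3 : (3 * b + 2)%N%:R = 0 :> 'F_p by apply/eqP; rewrite Fp_eq0.
rewrite (natr_fact3_ffact a3 b3 le_ka le_kb) -!bin_ffact.
rewrite (_ : 27 ^ k * k`! * ('C(a, k) * k`!) * ('C(b, k) * k`!)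
           = 'C(a, k) * 'C(b, k) * (27 ^ k * k`! ^ 3))%N; last by ring.
by rewrite natrM mulfK.
Qed.

Lemma sum_binM_min a b :
  (\sum_(k < (minn a b).+1) 'C(a, k) * 'C(b, k))%N = 'C(a + b, minn a b).
Proof.
wlog le_ab : a b / (a <= b)%N.
  move=> sym; case/orP: (leq_total a b) => /sym //.
  by rewrite minnC addnC; under eq_bigr do rewrite mulnC.
rewrite (minn_idPl le_ab) addnC -binomial.Vandermonde.
by apply: eq_bigr => -[j /= le_ja] _; rewrite mulnC bin_sub.
Qed.

Lemma Fp_bin_pred p j : prime p -> (j < p)%N -> 'C(p.-1, j)%:R = (-1) ^+ j :> 'F_p.
Proof.
move=> p_pr; elim: j => [|j IHj] lt_jp; first by rewrite bin0 expr0.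
have : ('C(p.-1, j.+1) + 'C(p.-1, j))%:R = 0 :> 'F_p.
  rewrite -binS prednK ?prime_gt0 //.
  by apply/eqP; rewrite -(dvdn_pcharf (pchar_Fp p_pr)) prime_dvd_bin.
rewrite natrD (IHj (ltnW lt_jp)) => /eqP; rewrite addr_eq0 => /eqP ->.
by rewrite exprS mulN1r.
Qed.

Lemma thirds_mod_prime p : prime p -> (3 < p)%N ->
  exists a b, [/\ (p %| 3 * a + 1)%N, (p %| 3 * b + 2)%N, (a + b = p.-1)%N
                & minn a b = p %/ 3]%N.
Proof.
move=> p_pr lt3p; have p3 : ~~ (3 %| p)%N by rewrite dvdn_prime2 // ltn_eqF.
have [p_mod | p_mod] : (p %% 3 = 1 \/ p %% 3 = 2)%N by lia.
- exists (p %/ 3)%N, (2 * (p %/ 3))%N; split; try lia.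
    by rewrite (_ : (3 * _ + 1 = p)%N) ?dvdnn //; lia.
  by rewrite (_ : (3 * _ + 2 = 2 * p)%N) ?dvdn_mull ?dvdnn //; lia.
- exists (2 * (p %/ 3)).+1%N, (p %/ 3)%N; split; try lia.
    by rewrite (_ : (3 * _ + 1 = 2 * p)%N) ?dvdn_mull ?dvdnn //; lia.
  by rewrite (_ : (3 * _ + 2 = p)%N) ?dvdnn //; lia.
Qed.

(* In ring_scope a bare [3 : nat] elaborates to [3%:R], convertible to [3%N]. *)
Lemma legendre_3 p : prime p -> (3 < p)%N -> legendre p 3%N = (-1) ^+ (p %/ 3)%N.
Proof.
move=> p_pr lt3p; have p3 : ~~ (3 %| p)%N by rewrite dvdn_prime2 // ltn_eqF.
have p_odd : odd p by case: (even_prime p_pr) lt3p => [->|].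
have odd_quo : odd (p %/ 3)%N = ~~ odd (p %% 3)%N.
  have := p_odd; rewrite {1}(divn_eq p 3) oddD oddM andbT.
  by move/addbP <-; rewrite negbK.
rewrite /legendre (negbTE p3) -signr_odd odd_quo.
have [-> | ->] : (p %% 3 = 1 \/ p %% 3 = 2)%N by lia.
- rewrite (_ : [exists _, _] = true) //.
  by apply/existsP; exists (Ordinal (isT : 1 < 3)%N).
- rewrite (_ : [exists _, _] = false) //.
  by apply/negbTE/existsP => -[[[|[|[|m]]] lt_m3]].
Qed.

Theorem corollary2p2 (p : nat) (hp : prime p) (hp3 : (3 < p)%N) :
  \sum_(0 <= k < (p %/ 3).+1)
      (((3 * k)`!)%:R / ((27 ^ k * (k`!) ^ 3)%:R) : 'F_p)
  = (legendre p 3)%:~R.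
Proof.
have [a [b [pa pb ab ab_min]]] := thirds_mod_prime hp hp3.
rewrite -ab_min big_mkord (eq_bigr (fun k : 'I_(minn a b).+1 => ('C(a, k) * 'C(b, k))%N%:R)).
  rewrite -natr_sum sum_binM_min ab Fp_bin_pred // ab_min; last by lia.
  by rewrite legendre_3 // rmorph_sign.
move=> k _; have := ltn_ord k; rewrite ltnS => le_k_min.
by apply: Fp_fact3_div_binM => //; lia.
Qed.
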